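(* For every $\theta\in[0,1]$, $f(\theta)=l(\theta)$.
   Context: A weighted digraph $D=(V,A,w)$ is a digraph without loops or parallel arcs (opposite arcs allowed) with weights $w:A\to\mathbb{R}_{\ge0}$; $w(D)$ is the total arc weight. For a partition $(X,Y)$ of $V$, $w(X,Y)$ is the total weight of arcs from $X$ to $Y$, and $\mathrm{mac}(D)=\max_{(X,Y)}w(X,Y)$. For $v\in V$, $r(v)=w^+(v)-w^-(v)$ (total weight leaving minus total weight entering $v$); $r^+(D)=\sum_{r(x)>0}r(x)$; $\theta(D)=r^+(D)/w(D)$ for $w(D)>0$. For $\theta\in[0,1]$, $f(\theta)$ is the supremum of all reals $g$ such that $\mathrm{mac}(D)\ge g\cdot w(D)$ for all weighted digraphs $D$ with $w(D)>0$ and $\theta(D)=\theta$. Also $l(\theta)=\frac14+\frac{\theta^2}{4(1-2\theta)}$ if $\theta<1/3$ and $l(\theta)=\theta$ if $\theta\ge1/3$. *)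

From HB Require Import structures.
From mathcomp Require Import all_boot all_order all_algebra.
From mathcomp Require Import boolp classical_sets reals.
Set Implicit Arguments. Unset Strict Implicit. Unset Printing Implicit Defensive.
Import Order.TTheory GRing.Theory Num.Theory.
Local Open Scope ring_scope.

(* A weighted digraph on the vertex set 'I_n is given by a weight function
   w : 'I_n -> 'I_n -> R; w u v is the weight of the arc u -> v, and weight 0
   means "no arc" (this is harmless: all quantities below are sums of weights).
   No loops, no parallel arcs (a function), opposite arcs allowed. *)
Definition wdigraph (R : realType) (n : nat) (w : 'I_n -> 'I_n -> R) : Prop :=
  (forall u v, 0 <= w u v) /\ (forall v, w v v = 0).

Definition wt (R : realType) (n : nat) (w : 'I_n -> 'I_n -> R) : R :=
  \sum_(u : 'I_n) \sum_(v : 'I_n) w u v.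

Definition cutw (R : realType) (n : nat) (w : 'I_n -> 'I_n -> R)
  (X : {set 'I_n}) : R :=
  \sum_(u in X) \sum_(v in ~: X) w u v.

Definition mac (R : realType) (n : nat) (w : 'I_n -> 'I_n -> R) : R :=
  \big[Num.max/0]_(X : {set 'I_n}) cutw w X.

Definition rdeg (R : realType) (n : nat) (w : 'I_n -> 'I_n -> R) (v : 'I_n) : R :=
  \sum_(u : 'I_n) w v u - \sum_(u : 'I_n) w u v.

Definition rplus (R : realType) (n : nat) (w : 'I_n -> 'I_n -> R) : R :=
  \sum_(v : 'I_n | 0 < rdeg w v) rdeg w v.

Definition theta (R : realType) (n : nat) (w : 'I_n -> 'I_n -> R) : R :=
  rplus w / wt w.

Definition fth (R : realType) (th : R) : R :=
  sup [set g : R | forall (n : nat) (w : 'I_n -> 'I_n -> R),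
         wdigraph w -> 0 < wt w -> theta w = th -> g * wt w <= mac w].

Definition lth (R : realType) (th : R) : R :=
  if th < 3^-1 then 4^-1 + th ^+ 2 / (4 * (1 - 2 * th)) else th.

(* Lower bound: put each vertex v on the source side independently with
   probability 1/2 + t sgn r(v).  The expected cut is at least
   (1/4 - t^2) w(D) + (t + 2 t^2) r^+(D); as a multilinear function of the
   probabilities of a loopless digraph it is exceeded by some actual cut.
   Taking t = theta / (2 (1 - 2 theta)) for theta < 1/3 and t = 1/2 otherwise
   gives l(theta) w(D).
   Upper bound: take two complete digraphs on m vertices with arc weight
   (1 - theta) m and add every arc from the first to the second with weight
   2 theta (m - 1).  This digraph has ratio theta and weight 2 m^2 (m - 1), and
   a cut containing i vertices of the first half and j of the second has weight
   at most l(theta) w(D) + m^2 / 2, by maximising a quadratic in i + m - j.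
   Letting m grow rules out every constant above l(theta). *)

From HB Require Import structures.
From mathcomp Require Import all_boot all_order all_algebra.
From mathcomp Require Import boolp classical_sets reals.
From mathcomp Require Import ring lra.
Import Order.TTheory GRing.Theory Num.Theory.
Local Open Scope ring_scope.
Set Implicit Arguments. Unset Strict Implicit. Unset Printing Implicit Defensive.


Section FractionalCut.
Variables (R : realType) (n : nat) (w : 'I_n -> 'I_n -> R).
Hypothesis w_loopless : forall v, w v v = 0.

Definition frac_cut (p : 'I_n -> R) : R :=
  \sum_u \sum_v w u v * (p u * (1 - p v)).

Lemma frac_cut_indicator (X : {set 'I_n}) :
  frac_cut (fun u => (u \in X)%:R) = cutw w X.
Proof.
rewrite /frac_cut /cutw [RHS]big_mkcond; apply: eq_bigr => u _.
case: (boolP (u \in X)) => uX /=; last by rewrite big1 // => v _; ring.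
rewrite [RHS]big_mkcond; apply: eq_bigr => v _; rewrite inE.
by case: (v \in X) => /=; ring.
Qed.

Definition fix_at (v0 : 'I_n) (b : R) (p : 'I_n -> R) (u : 'I_n) : R :=
  if u == v0 then b else p u.

(* Since there is no loop at [v0], [frac_cut] is affine in [p v0]. *)
Lemma frac_cut_fix_at (v0 : 'I_n) (p : 'I_n -> R) :
  frac_cut p = (1 - p v0) * frac_cut (fix_at v0 0 p) + p v0 * frac_cut (fix_at v0 1 p).
Proof.
rewrite /frac_cut !mulr_sumr -big_split; apply: eq_bigr => u _.
rewrite !mulr_sumr -big_split; apply: eq_bigr => v _ /=; rewrite /fix_at.
by case: (eqVneq u v0) => [->|_]; case: (eqVneq v v0) => [->|_];
  rewrite ?w_loopless; ring.
Qed.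

Lemma exists_cut_ge_frac_cut (p : 'I_n -> R) : (forall u, 0 <= p u <= 1) ->
  exists X, frac_cut p <= cutw w X.
Proof.
suff: forall s : seq 'I_n, forall p, (forall u, 0 <= p u <= 1) ->
    (forall u, u \notin s -> p u = 0 \/ p u = 1) -> exists X, frac_cut p <= cutw w X.
  by move=> /(_ (enum 'I_n) p) hs p01; apply: hs => // u; rewrite mem_enum.
elim=> [|v0 s IHs] {}p p01 p_int.
  exists [set u | p u == 1]; rewrite -frac_cut_indicator le_eqVlt; apply/orP; left.
  apply/eqP; congr frac_cut; apply: funext => u; rewrite inE.
  by case: (p_int u isT) => ->; rewrite ?eqxx // eq_sym oner_eq0.
have fix01 b : 0 <= b <= 1 -> forall u, 0 <= fix_at v0 b p u <= 1.
  by move=> b01 u; rewrite /fix_at; case: (u == v0).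
have fix_int b : b = 0 \/ b = 1 ->
    forall u, u \notin s -> fix_at v0 b p u = 0 \/ fix_at v0 b p u = 1.
  move=> b01 u us; rewrite /fix_at; case: (eqVneq u v0) => // uv0.
  by apply: p_int; rewrite inE negb_or uv0.
have [X0 hX0] : exists X, frac_cut (fix_at v0 0 p) <= cutw w X.
  by apply: IHs; [apply: fix01; rewrite lexx ler01 | apply: fix_int; left].
have [X1 hX1] : exists X, frac_cut (fix_at v0 1 p) <= cutw w X.
  by apply: IHs; [apply: fix01; rewrite lexx ler01 | apply: fix_int; right].
have /andP [pv0_ge0 pv0_le1] := p01 v0.
rewrite (frac_cut_fix_at v0 p).
case: (lerP (frac_cut (fix_at v0 0 p)) (frac_cut (fix_at v0 1 p))) => hF;
  [exists X1 | exists X0]; nra.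
Qed.

End FractionalCut.

Lemma cutw_le_mac (R : realType) (n : nat) (w : 'I_n -> 'I_n -> R) (X : {set 'I_n}) :
  cutw w X <= mac w.
Proof. exact: le_bigmax. Qed.

Section Imbalance.
Variables (R : realType) (n : nat) (w : 'I_n -> 'I_n -> R).

Definition rsign (v : 'I_n) : R := if 0 < rdeg w v then 1 else -1.

Lemma sum_rdeg : \sum_v rdeg w v = 0.
Proof. by rewrite /rdeg sumrB exchange_big subrr. Qed.

Lemma rplus_ge0 : 0 <= rplus w.
Proof. by apply: sumr_ge0 => v /ltW. Qed.

Lemma sum_rsign_rdeg : \sum_v rsign v * rdeg w v = 2 * rplus w.
Proof.
have := sum_rdeg; rewrite (bigID (fun v => 0 < rdeg w v)) /= => sum0.
rewrite (bigID (fun v => 0 < rdeg w v)) /= -/(rplus w).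
rewrite [X in X + _](eq_bigr (fun v => rdeg w v)) => [|v pos]; last first.
  by rewrite /rsign pos mul1r.
rewrite [X in _ + X](eq_bigr (fun v => - rdeg w v)) => [|v npos]; last first.
  by rewrite /rsign (negbTE npos) mulN1r.
move: sum0; rewrite sumrN -/(rplus w); lra.
Qed.

Lemma sum_arc_rsign : \sum_u \sum_v w u v * (rsign u - rsign v) = 2 * rplus w.
Proof.
rewrite -sum_rsign_rdeg /rdeg.
transitivity (\sum_u \sum_v w u v * rsign u - \sum_v \sum_u w u v * rsign v).
  rewrite [X in _ - X]exchange_big -sumrB; apply: eq_bigr => u _.
  by rewrite -sumrB; apply: eq_bigr => v _; ring.
rewrite -sumrB; apply: eq_bigr => v _.
by rewrite mulrBr !mulr_sumr; congr (_ - _); apply: eq_bigr => u _; ring.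
Qed.

End Imbalance.

Section LowerBound.
Variables (R : realType) (n : nat) (w : 'I_n -> 'I_n -> R).
Hypothesis w_digraph : wdigraph w.

(* Expected cut when [v] is put on the source side with probability
   [1/2 + t * rsign v]. *)
Lemma mac_ge_biased_cut (t : R) : 0 <= t <= 1/2 ->
  (1/4 - t ^+ 2) * wt w + (t + 2 * t ^+ 2) * rplus w <= mac w.
Proof.
move=> /andP [t_ge0 t_le].
pose p u := 1/2 + rsign w u * t.
have rsign_pm1 u : rsign w u = 1 \/ rsign w u = -1.
  by rewrite /rsign; case: (0 < rdeg w u); [left | right].
have p01 u : 0 <= p u <= 1 by rewrite /p; case: (rsign_pm1 u) => ->; apply/andP; lra.
have [X hX] := exists_cut_ge_frac_cut (proj2 w_digraph) p01.
apply: le_trans (cutw_le_mac w X); apply: le_trans hX.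
have -> : (1/4 - t ^+ 2) * wt w + (t + 2 * t ^+ 2) * rplus w = \sum_u \sum_v
    ((1/4 - t ^+ 2) * w u v + (t/2 + t ^+ 2) * (w u v * (rsign w u - rsign w v))).
  under eq_bigr do rewrite big_split /= -!mulr_sumr.
  by rewrite big_split /= -!mulr_sumr sum_arc_rsign -/(wt w); field.
apply: ler_sum => u _; apply: ler_sum => v _.
have w_ge0 := proj1 w_digraph u v.
have wt2_ge0 : 0 <= w u v * t ^+ 2 by rewrite mulr_ge0 ?sqr_ge0.
by rewrite /p; case: (rsign_pm1 u) => ->; case: (rsign_pm1 v) => ->; nra.
Qed.

Lemma lth_theta_mul_wt_le_mac : 0 < wt w -> lth (theta w) * wt w <= mac w.
Proof.
move=> wt_gt0; set th := theta w.
have rplusE : rplus w = th * wt w by rewrite /th /theta divfK // gt_eqF.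
have th_ge0 : 0 <= th by rewrite divr_ge0 ?rplus_ge0 ?ltW.
rewrite /lth; case: ifP => th_lt.
  have h12 : 0 < 1 - 2 * th by lra.
  set t := th / (2 * (1 - 2 * th)).
  have t_range : 0 <= t <= 1/2.
    by apply/andP; split; [rewrite divr_ge0 //; lra | rewrite ler_pdivrMr; lra].
  rewrite (_ : _ * wt w = (1/4 - t ^+ 2) * wt w + (t + 2 * t ^+ 2) * rplus w).
    exact: mac_ge_biased_cut.
  by rewrite rplusE /t; field; lra.
have half_range : 0 <= (1/2 : R) <= 1/2 by rewrite lexx andbT divr_ge0.
rewrite (_ : _ * wt w = (1/4 - (1/2) ^+ 2) * wt w + (1/2 + 2 * (1/2) ^+ 2) * rplus w).
  exact: mac_ge_biased_cut.
by rewrite rplusE; field.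
Qed.

End LowerBound.

Section QuadraticBounds.
Variable R : realType.

Lemma quadratic_le_lth (th m s : R) : 0 <= th <= 1 -> 0 <= s <= 2 * m ->
  (1 - th) * m * s / 2 - (1 - 2 * th) * s ^+ 2 / 4 <= lth th * m ^+ 2.
Proof.
move=> /andP [th_ge0 th_le1] /andP [s_ge0 s_le]; rewrite -subr_ge0 /lth.
case: ifP => th_lt.
  have h12 : 0 < 1 - 2 * th by lra.
  have -> : (4^-1 + th ^+ 2 / (4 * (1 - 2 * th))) * m ^+ 2 -
      ((1 - th) * m * s / 2 - (1 - 2 * th) * s ^+ 2 / 4) =
      ((1 - th) * m - (1 - 2 * th) * s) ^+ 2 / (4 * (1 - 2 * th)).
    by field; rewrite gt_eqF.
  by rewrite divr_ge0 ?sqr_ge0 //; lra.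
move/negbT: th_lt; rewrite -leNgt => th_ge.
set T := 2 * m - s.
have -> : th * m ^+ 2 - ((1 - th) * m * s / 2 - (1 - 2 * th) * s ^+ 2 / 4) =
    m * T * (3 * th - 1) / 2 + (1 - 2 * th) * T ^+ 2 / 4 by rewrite /T; field.
have mT_ge0 : 0 <= m * T by rewrite mulr_ge0 /T; lra.
have mTth_ge0 : 0 <= m * T * th by rewrite mulr_ge0.
have mT3_ge0 : 0 <= m * T * (3 * th - 1) by rewrite mulr_ge0 //; lra.
case: (lerP th (1/2)) => th_half.
  have : 0 <= (1 - 2 * th) * T ^+ 2 by rewrite mulr_ge0 ?sqr_ge0 //; lra.
  lra.
(* For [th > 1/2] the concave term is controlled by [T <= 2 m]. *)
have : 0 <= (2 * th - 1) * (T * (2 * m - T)) by rewrite !mulr_ge0 /T; lra.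
rewrite expr2; nra.
Qed.

Lemma two_sided_cut_le_lth (th m i j : R) : 0 <= th <= 1 ->
  0 <= i <= m -> 0 <= j <= m ->
  (1 - th) / 2 * (i * (m - i) + j * (m - j)) + th * i * (m - j) <= lth th * m ^+ 2.
Proof.
move=> th01 /andP [i_ge0 i_le] /andP [j_ge0 j_le].
set s := i + (m - j); set d := i - (m - j).
have s_range : 0 <= s <= 2 * m by apply/andP; split; rewrite /s; lra.
apply: le_trans (quadratic_le_lth th01 s_range).
have -> : (1 - th) / 2 * (i * (m - i) + j * (m - j)) + th * i * (m - j) =
    (1 - th) * m * s / 2 - (1 - 2 * th) * s ^+ 2 / 4 - d ^+ 2 / 4.
  by rewrite /s /d; field.
by rewrite lerBlDr lerDl divr_ge0 ?sqr_ge0.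
Qed.

Lemma extremal_cut_value_le (th m i j : R) : 0 <= th <= 1 -> 1 < m ->
  0 <= i <= m -> 0 <= j <= m ->
  (1 - th) * m * (i * (m - i) + j * (m - j)) + 2 * th * (m - 1) * i * (m - j)
  <= lth th * (2 * m ^+ 2 * (m - 1)) + m ^+ 2 / 2.
Proof.
move=> th01 m_gt1 i_range j_range.
have key := two_sided_cut_le_lth th01 i_range j_range.
move: th01 i_range j_range => /andP [th_ge0 th_le1] /andP [i_ge0 i_le] /andP [j_ge0 j_le].
set Q := i * (m - i) + j * (m - j) in key *.
have Q_le : Q <= m ^+ 2 / 2.
  have : 0 <= (m - 2 * i) ^+ 2 + (m - 2 * j) ^+ 2 by rewrite addr_ge0 ?sqr_ge0.
  by rewrite /Q !expr2; lra.
have Q_ge0 : 0 <= Q by rewrite /Q addr_ge0 ?mulr_ge0 //; lra.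
have thQ_ge0 : 0 <= th * Q by rewrite mulr_ge0.
have -> : (1 - th) * m * Q + 2 * th * (m - 1) * i * (m - j) =
    2 * (m - 1) * ((1 - th) / 2 * Q + th * i * (m - j)) + (1 - th) * Q by field.
have : 2 * (m - 1) * ((1 - th) / 2 * Q + th * i * (m - j)) <=
    2 * (m - 1) * (lth th * m ^+ 2) by rewrite ler_wpM2l //; lra.
lra.
Qed.

End QuadraticBounds.

Section IndicatorSums.
Variables (R : pzSemiRingType) (T : finType).

Lemma sum_indicator (A B : {set T}) :
  \sum_(u in A) (u \in B)%:R = #|A :&: B|%:R :> R.
Proof.
rewrite -sumr_const big_mkcond [RHS]big_mkcond; apply: eq_bigr => u _.
by rewrite inE; case: (u \in A); case: (u \in B).
Qed.

Lemma sum_indicatorT (B : {set T}) : \sum_u (u \in B)%:R = #|B|%:R :> R.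
Proof.
have := sum_indicator [set: T] B; rewrite finset.setTI => <-.
by apply: eq_bigl => u; rewrite inE.
Qed.

End IndicatorSums.

Section ExtremalDigraph.
Variables (R : realType) (th : R) (m : nat).
Hypothesis th01 : 0 <= th <= 1.
Hypothesis m_gt1 : (1 < m)%N.

Definition ext_left : {set 'I_(m + m)} := [set lshift m i | i : 'I_m].

Definition in_left (u : 'I_(m + m)) : R := (u \in ext_left)%:R.
Definition in_right (u : 'I_(m + m)) : R := (u \in ~: ext_left)%:R.

Definition ext_alpha : R := (1 - th) * m%:R.
Definition ext_beta : R := 2 * th * (m%:R - 1).

Definition ext_w (u v : 'I_(m + m)) : R :=
  if u == v then 0 else
  ext_alpha * (in_left u * in_left v) + ext_alpha * (in_right u * in_right v)
  + ext_beta * (in_left u * in_right v).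

Lemma card_ext_left : #|ext_left| = m.
Proof. by rewrite card_imset ?cardsT ?card_ord //; exact: lshift_inj. Qed.

Lemma card_ext_right : #|~: ext_left| = m.
Proof. by apply/eqP; rewrite -(eqn_add2l m) -{1}card_ext_left cardsC card_ord. Qed.

Lemma sum_in_left : \sum_u in_left u = m%:R.
Proof. by rewrite sum_indicatorT card_ext_left. Qed.

Lemma sum_in_right : \sum_u in_right u = m%:R.
Proof. by rewrite sum_indicatorT card_ext_right. Qed.

Lemma ext_wE u v : ext_w u v =
  ext_alpha * (in_left u * in_left v) + ext_alpha * (in_right u * in_right v)
  + ext_beta * (in_left u * in_right v) - ext_alpha * (u == v)%:R.
Proof.
rewrite /ext_w; case: (eqVneq u v) => [->|_]; last by rewrite mulr0 subr0.
by rewrite /in_left /in_right finset.in_setC; case: (v \in ext_left) => /=; ring.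
Qed.

Lemma ext_w_outdeg u : \sum_v ext_w u v =
  (ext_alpha + ext_beta) * m%:R * in_left u + ext_alpha * m%:R * in_right u - ext_alpha.
Proof.
under eq_bigr do rewrite ext_wE.
rewrite sumrB !big_split /= -!mulr_sumr sum_in_left sum_in_right.
rewrite (bigD1 u) //= eqxx big1 => [|v]; last by rewrite eq_sym => /negbTE ->.
by rewrite /= addr0; ring.
Qed.

Lemma ext_w_indeg v : \sum_u ext_w u v =
  ext_alpha * m%:R * in_left v + (ext_alpha + ext_beta) * m%:R * in_right v - ext_alpha.
Proof.
under eq_bigr do rewrite ext_wE.
rewrite sumrB !big_split /= -!mulr_sumr -!mulr_suml sum_in_left sum_in_right.
rewrite (bigD1 v) //= eqxx big1 => [|u /negbTE -> //].
by rewrite addr0 /=; ring.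
Qed.

Lemma ext_w_digraph : wdigraph ext_w.
Proof.
have [th_ge0 th_le1] := andP th01.
have m_ge1 : (1 : R) <= m%:R by rewrite ler1n ltnW.
have alpha_ge0 : 0 <= ext_alpha by rewrite mulr_ge0 ?subr_ge0.
have beta_ge0 : 0 <= ext_beta by rewrite !mulr_ge0 ?subr_ge0.
split=> [u v|v]; last by rewrite /ext_w eqxx.
rewrite /ext_w /in_left /in_right !finset.in_setC; case: (u == v) => //.
by case: (u \in ext_left); case: (v \in ext_left) => /=; lra.
Qed.

Lemma wt_ext_w : wt ext_w = 2 * m%:R ^+ 2 * (m%:R - 1).
Proof.
rewrite /wt; under eq_bigr do rewrite ext_w_outdeg.
rewrite sumrB !big_split /= -!mulr_sumr sum_in_left sum_in_right sumr_const card_ord.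
by rewrite -[_ *+ (m + m)]mulr_natr natrD /ext_alpha /ext_beta; ring.
Qed.

Lemma rdeg_ext_w v : rdeg ext_w v = ext_beta * m%:R * (in_left v - in_right v).
Proof. by rewrite /rdeg ext_w_outdeg ext_w_indeg; ring. Qed.

Lemma rplus_ext_w : rplus ext_w = ext_beta * m%:R ^+ 2.
Proof.
have [th_ge0 _] := andP th01.
have m_ge1 : (1 : R) <= m%:R by rewrite ler1n ltnW.
have bm_ge0 : 0 <= ext_beta * m%:R by rewrite !mulr_ge0 // subr_ge0.
have [bm0|bm_neq0] := eqVneq (ext_beta * m%:R) 0.
  rewrite /rplus big1 => [|v]; first by rewrite expr2 mulrA bm0 mul0r.
  by rewrite rdeg_ext_w bm0 mul0r ltxx.
have bm_gt0 : 0 < ext_beta * m%:R by rewrite lt_def bm_neq0.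
rewrite /rplus (eq_bigl (fun v => v \in ext_left)) => [|v]; last first.
  rewrite rdeg_ext_w /in_left /in_right finset.in_setC; case: (v \in ext_left) => /=.
    by rewrite subr0 mulr1.
  by rewrite sub0r mulrN1 oppr_gt0 ltNge ltW.
rewrite (eq_bigr (fun _ => ext_beta * m%:R)) => [|v vl]; last first.
  by rewrite rdeg_ext_w /in_left /in_right finset.in_setC vl subr0 mulr1.
by rewrite sumr_const card_ext_left -mulr_natr; ring.
Qed.

Lemma theta_ext_w : theta ext_w = th.
Proof.
have m_gt1R : 1 < m%:R :> R by rewrite ltr1n.
rewrite /theta rplus_ext_w wt_ext_w /ext_beta; field.
by rewrite subr_eq0 !gt_eqF // (lt_trans ltr01 m_gt1R).
Qed.

Lemma cutw_ext_w (X : {set 'I_(m + m)}) :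
  let i := #|X :&: ext_left|%:R in let j := #|X :&: ~: ext_left|%:R in
  cutw ext_w X =
  ext_alpha * (i * (m%:R - i) + j * (m%:R - j)) + ext_beta * i * (m%:R - j).
Proof.
move=> i j; have cardCI B : #|~: X :&: B|%:R = #|B|%:R - #|X :&: B|%:R :> R.
  by rewrite -(cardsID X B) finset.setDE natrD (finset.setIC B X) (finset.setIC B); ring.
rewrite /cutw; under eq_bigr => u uX.
  rewrite (eq_bigr (fun v => ext_alpha * (in_left u * in_left v)
      + ext_alpha * (in_right u * in_right v) + ext_beta * (in_left u * in_right v)));
    last by move=> v; rewrite inE /ext_w; case: eqP => // <-; rewrite uX.
  rewrite !big_split /= -!mulr_sumr /in_left /in_right !sum_indicator !cardCI.
  rewrite card_ext_left card_ext_right -/i -/j.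
  over.
by rewrite !big_split /= -!mulr_sumr -!mulr_suml !sum_indicator -/i -/j; ring.
Qed.

Lemma mac_ext_w_le : mac ext_w <= (lth th + (4 * (m%:R - 1))^-1) * wt ext_w.
Proof.
have m_gt1R : 1 < m%:R :> R by rewrite ltr1n.
have -> : (lth th + (4 * (m%:R - 1))^-1) * wt ext_w =
    lth th * (2 * m%:R ^+ 2 * (m%:R - 1)) + m%:R ^+ 2 / 2.
  by rewrite wt_ext_w; field; rewrite subr_eq0 gt_eqF.
have cut_le X : cutw ext_w X <= lth th * (2 * m%:R ^+ 2 * (m%:R - 1)) + m%:R ^+ 2 / 2.
  rewrite cutw_ext_w /ext_alpha /ext_beta; apply: extremal_cut_value_le => //.
    by rewrite ler0n ler_nat -[X in (_ <= X)%N]card_ext_left subset_leq_card ?finset.subsetIr.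
  by rewrite ler0n ler_nat -[X in (_ <= X)%N]card_ext_right subset_leq_card ?finset.subsetIr.
apply: bigmax_le => [|X _]; last exact: cut_le.
apply: le_trans _ (cut_le finset.set0); apply: sumr_ge0 => u _; apply: sumr_ge0 => v _.
exact: (proj1 ext_w_digraph).
Qed.

End ExtremalDigraph.

Lemma sup_eq_max (R : realType) (E : set R) (x : R) :
  E x -> ubound E x -> sup E = x.
Proof.
move=> Ex ubx; apply/le_anti/andP; split; first by apply: ge_sup => //; exists x.
by apply: sup_upper_bound => //; split; exists x.
Qed.

Lemma le_lth_of_mac_ge (R : realType) (th g : R) : 0 <= th <= 1 ->
  (forall n (w : 'I_n -> 'I_n -> R),
    wdigraph w -> 0 < wt w -> theta w = th -> g * wt w <= mac w) ->
  g <= lth th.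
Proof.
move=> th01 g_ok; apply/ler_addgt0Pr => e e_gt0.
set k := Num.truncn (4 * e)^-1; have m_gt1 : (1 < k.+2)%N by [].
have e4_gt0 : 0 < 4 * e by lra.
have k_big : 1 < 4 * e * k.+1%:R.
  have := truncnS_gt (4 * e)^-1; rewrite -/k => k_gt.
  have := mulfV (lt0r_neq0 e4_gt0); nra.
have m1E : (k.+2)%:R - 1 = k.+1%:R :> R by rewrite -[(k.+2)%:R]natr1 addrK.
have wt_gt0 : 0 < wt (ext_w th (m := k.+2)).
  by rewrite wt_ext_w m1E !mulr_gt0 ?exprn_gt0 ?ltr0Sn.
have := g_ok _ _ (ext_w_digraph th01 m_gt1) wt_gt0 (theta_ext_w th01 m_gt1).
move=> /le_trans /(_ (mac_ext_w_le th01 m_gt1)); rewrite ler_pM2r // => g_le.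
apply: le_trans g_le _; rewrite lerD2l m1E -[_^-1]mul1r ler_pdivrMr.
  by lra.
by rewrite mulr_gt0 ?ltr0Sn.
Qed.

Theorem mainTheorem9 (R : realType) (th : R) :
  0 <= th <= 1 -> fth th = lth th.
Proof.
move=> th01; apply: sup_eq_max => [n w w_digraph wt_gt0 <-|g].
  exact: lth_theta_mul_wt_le_mac.
exact: le_lth_of_mac_ge.
Qed.
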